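(* Suppose the fraction $\alpha$ of perfect labelers satisfies $\alpha\ge0.7$. There is an absolute constant $C$ such that, setting $N=\lceil C\log(1/\epsilon)\rceil$, the following holds. For a finite set $S\subseteq\mathcal{X}$ and classifier $h:\mathcal{X}\to\{+1,-1\}$, define $\textsc{Filter}(S,h)$: start with $S_I=\emptyset$; for each $x\in S$, for $t=1,\dots,N$, draw a fresh labeler $i\sim P$ independently and set $y_t=\ell_i(x)$; if $t$ is odd and the majority of $y_1,\dots,y_t$ equals $h(x)$, stop processing $x$ (discarding it); if this never happens for $t\le N$, add $x$ to $S_I$. Return $S_I$. Then for every $x\in S$: (1) if $h(x)=f^*(x)$, then $x\in\textsc{Filter}(S,h)$ with probability less than $\sqrt\epsilon$; (2) if $h(x)\ne f^*(x)$, then $x\in\textsc{Filter}(S,h)$ with probability at least $0.5$.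
   Context: There is an unknown target $f^*:\mathcal{X}\to\{+1,-1\}$. Labeler $i$ is a function $\ell_i:\mathcal{X}\to\{+1,-1\}$, perfect if $\ell_i$ agrees with $f^*$; non-perfect labelers are arbitrary fixed functions. $P$ is the uniform distribution over labelers and $\alpha$ is the $P$-probability that a labeler is perfect. $\epsilon\in(0,1)$. *)

From HB Require Import structures.
From mathcomp Require Import all_boot all_order all_algebra.
From mathcomp Require Import all_classical all_reals all_analysis.
From mathcomp Require Import Rstruct Rstruct_topology.
Set Implicit Arguments. Unset Strict Implicit. Unset Printing Implicit Defensive.
Import Order.TTheory GRing.Theory Num.Theory.
Local Open Scope ring_scope.

(* Labels {+1,-1} are encoded as bool (true = +1, false = -1).
   Labelers are indexed by a nonempty finite type I; P is uniform on I. *)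

Definition perfect (X : Type) (I : finType) (l : I -> X -> bool) (f : X -> bool)
  (i : I) : Prop := forall x, l i x = f x.

Definition alpha_perfect (X : Type) (I : finType) (l : I -> X -> bool)
  (f : X -> bool) : Rdefinitions.R :=
  #|[set i : I | `[< perfect l f i >]]|%:R / #|I|%:R.

(* Given the labels y_1..y_N obtained for a point (index t : 'I_N is round t+1),
   the point is discarded iff at some odd round t+1 <= N the majority of
   y_1..y_{t+1} equals hx (t+1 odd, so no ties: majority = strictly more than half). *)
Definition discarded (N : nat) (y : 'I_N -> bool) (hx : bool) : bool :=
  [exists t : 'I_N, odd t.+1 &&
     (t.+1 < 2 * #|[set s : 'I_N | (s <= t)%N && (y s == hx)]|)%N].

(* Filter(S,h): S is a duplicate-free list (finite set); omega k t is the labeler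
   drawn at round t+1 for the k-th point of S (all draws independent uniform). *)
Definition Filter (X : eqType) (I : finType) (N : nat) (l : I -> X -> bool)
  (S : seq X) (h : X -> bool) (omega : {ffun 'I_(size S) -> {ffun 'I_N -> I}}) : seq X :=
  pmap (fun k : 'I_(size S) =>
          match onth S k with
          | Some x => if discarded (fun t => l (omega k t) x) (h x) then None else Some x
          | None => None
          end) (enum 'I_(size S)).

Definition prob_in_filter (X : eqType) (I : finType) (N : nat) (l : I -> X -> bool)
  (S : seq X) (h : X -> bool) (x : X) : Rdefinitions.R :=
  #|[set omega : {ffun 'I_(size S) -> {ffun 'I_N -> I}} | x \in @Filter X I N l S h omega]|%:R
  / #|{ffun 'I_(size S) -> {ffun 'I_N -> I}}|%:R.

(* Only the votes on [x] matter. Let a vote be a success when it agrees with h(x); x is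
   discarded as soon as, at an odd round, the successes are a strict majority.

   If h(x) = f*(x), a vote succeeds with probability p >= 0.7. Surviving all N rounds
   forces at most N/2 successes, an event on which the product of the weights 2/3 (success)
   and 3/2 (failure) is at least 1; by Markov's inequality its probability is at most
   (2p/3 + 3(1-p)/2)^N <= (11/12)^N <= eps < sqrt eps once N >= 12 ln(1/eps).

   If h(x) <> f*(x), then p <= 0.3 and p + (1-p)(3/7)^2 <= 3/7, so (3/7)^d, where d is
   the number of net successes still needed for discarding, is a supermartingale
   starting at 3/7: x is discarded with probability at most 3/7 < 1/2. *)

From Pilot Require Import Defs.
From HB Require Import structures.
From mathcomp Require Import all_boot all_order all_algebra.
From mathcomp Require Import all_classical all_reals all_analysis.
From mathcomp Require Import Rstruct Rstruct_topology.
From mathcomp Require Import zify lra.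
Import Order.TTheory GRing.Theory Num.Theory.
Local Open Scope ring_scope.
Set Implicit Arguments. Unset Strict Implicit. Unset Printing Implicit Defensive.
Local Notation RR := Rdefinitions.R.

Definition fcons (T : Type) n (x : T) (w : 'I_n -> T) : 'I_n.+1 -> T :=
  fun t => if unlift ord0 t is Some t' then w t' else x.

Lemma fcons0 (T : Type) n (x : T) (w : 'I_n -> T) : fcons x w ord0 = x.
Proof. by rewrite /fcons unlift_none. Qed.

Lemma fconsS (T : Type) n (x : T) (w : 'I_n -> T) t : fcons x w (lift ord0 t) = w t.
Proof. by rewrite /fcons liftK. Qed.

Lemma fcons_tail (T : Type) n (x : T) (w : 'I_n -> T) : (fun t => fcons x w (lift ord0 t)) = w.
Proof. by apply: funext => t; rewrite fconsS. Qed.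

Lemma existsS_ord n (P : pred 'I_n.+1) :
  [exists t, P t] = P ord0 || [exists t : 'I_n, P (lift ord0 t)].
Proof.
apply/existsP/orP => [[t]|[P0|/existsP[t Pt]]]; last 2 first.
- by exists ord0.
- by exists (lift ord0 t).
by case: (unliftP ord0 t) => [t' -> Pt|-> P0]; [right; apply/existsP; exists t' | left].
Qed.

Lemma sum_ffunS (V : nmodType) (T : finType) n (G : {ffun 'I_n.+1 -> T} -> V) :
  \sum_(w : {ffun 'I_n.+1 -> T}) G w =
  \sum_(x : T) \sum_(w : {ffun 'I_n -> T}) G (finfun (fcons x w)).
Proof.
rewrite pair_big /=.
rewrite (reindex (fun p : T * {ffun 'I_n -> T} => finfun (fcons p.1 p.2))) //.
exists (fun w : {ffun 'I_n.+1 -> T} => (w ord0, [ffun t => w (lift ord0 t)])).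
  move=> [x w] _; congr pair; first by rewrite ffunE fcons0.
  by apply/ffunP => t; rewrite !ffunE fconsS.
move=> w _; apply/ffunP => t; rewrite !ffunE.
by case: (unliftP ord0 t) => [t' ->|->]; rewrite ?fconsS ?fcons0 ?ffunE.
Qed.

Section VoteSums.
Variables (R : numDomainType) (I : finType) (g : I -> bool).

Definition vote_sum n (F : ('I_n -> bool) -> R) : R :=
  \sum_(w : {ffun 'I_n -> I}) F (fun t => g (w t)).

Lemma vote_sumS n F :
  vote_sum F = \sum_(i : I) vote_sum (fun z : 'I_n -> bool => F (fcons (g i) z)).
Proof.
rewrite /vote_sum sum_ffunS; apply: eq_bigr => i _; apply: eq_bigr => w _.
congr F; apply: funext => t; rewrite ffunE /fcons.
by case: unlift.
Qed.

Lemma ler_vote_sum n (F G : ('I_n -> bool) -> R) :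
  (forall z, F z <= G z) -> vote_sum F <= vote_sum G.
Proof. by move=> FG; apply: ler_sum => w _; apply: FG. Qed.

Lemma vote_sum_const n c : vote_sum (fun _ : 'I_n -> bool => c) = c * #|I|%:R ^+ n.
Proof. by rewrite /vote_sum sumr_const card_ffun card_ord -[c *+ _]mulr_natr natrX. Qed.

Lemma vote_sumN n (P : pred ('I_n -> bool)) :
  vote_sum (fun z => (~~ P z)%:R) = #|I|%:R ^+ n - vote_sum (fun z => (P z)%:R).
Proof.
rewrite -[_ ^+ n]mul1r -vote_sum_const /vote_sum -sumrB.
by apply: eq_bigr => w _; case: (P _); rewrite ?subr0 ?subrr.
Qed.

Lemma vote_sum_card n (P : pred ('I_n -> bool)) :
  vote_sum (fun z => (P z)%:R) = #|[pred w : {ffun 'I_n -> I} | P (fun t => g (w t))]|%:R.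
Proof.
rewrite -sum1_card natr_sum big_mkcond; apply: eq_bigr => w _.
by rewrite inE; case: P.
Qed.

Lemma vote_sum_prod n (phi : bool -> R) :
  vote_sum (fun z : 'I_n -> bool => \prod_(t < n) phi (z t)) = (\sum_(i : I) phi (g i)) ^+ n.
Proof. by rewrite -[in RHS](card_ord n) -prodr_const bigA_distr_bigA. Qed.

End VoteSums.

(* The votes [z] come after [a] earlier votes, [c] of which agreed with [h x]. *)
Definition discarded_after (a c n : nat) (z : 'I_n -> bool) : bool :=
  [exists t : 'I_n, odd (a + t.+1) &&
     (a + t.+1 < 2 * (c + \sum_(s < n | s <= t) z s))%N].

Lemma discardedE N (y : 'I_N -> bool) hx :
  discarded y hx = discarded_after 0 0 (fun t => y t == hx).
Proof.
apply: eq_existsb => t; rewrite !add0n -sum1_card big_mkcond [in RHS]big_mkcond.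
do 3 f_equal; apply: eq_bigr => s _.
by rewrite inE; case: (s <= t)%N; case: (y s == hx).
Qed.

Lemma discarded_after0 a c (z : 'I_0 -> bool) : discarded_after a c z = false.
Proof. by apply/existsP => -[[]]. Qed.

Lemma discarded_afterS a c n (z : 'I_n.+1 -> bool) :
  discarded_after a c z =
    (odd a.+1 && (a.+1 < 2 * (c + z ord0))%N) ||
    discarded_after a.+1 (c + z ord0) (fun t => z (lift ord0 t)).
Proof.
rewrite /discarded_after existsS_ord addn1; congr (_ && (_ < 2 * (c + _))%N || _).
  by rewrite big_mkcond big_ord_recl /= big1 ?addn0 // => s _; rewrite lift0.
apply: eq_existsb => t; rewrite lift0 addSnnS -addnA; congr (_ && (_ < 2 * _)%N).
by rewrite big_mkcond big_ord_recl /= [in RHS]big_mkcond.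
Qed.

Lemma not_discarded_sum_le a c n (z : 'I_n -> bool) :
  (2 * c <= a)%N -> ~~ discarded_after a c z ->
  (2 * (c + \sum_(t < n) z t) <= a + n)%N.
Proof.
elim: n a c z => [|n IHn] a c z ca; first by rewrite big_ord0 !addn0.
rewrite discarded_afterS negb_or => /andP[not_now not_later].
have ca' : (2 * (c + z ord0) <= a.+1)%N.
  case: (z ord0) not_now => /=; last by lia.
  have [->|] := eqVneq a (2 * c)%N; last by lia.
  by rewrite /= oddM /= => /negP; lia.
by have := IHn _ _ _ ca' not_later; rewrite big_ord_recl /=; lia.
Qed.

Lemma card_ffun_at (A B : finType) (a0 : A) (P : pred B) :
  #|[set f : {ffun A -> B} | P (f a0)]| = (#|P| * #|B| ^ #|A|.-1)%N.
Proof.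
pose F a : pred B := if a == a0 then P else predT.
have -> : #|[set f : {ffun A -> B} | P (f a0)]| = #|family F|.
  apply: eq_card => f; rewrite inE; apply/idP/familyP => [Pf a|/(_ a0)].
    by rewrite /F; case: eqP => [->|].
  by rewrite /F eqxx.
rewrite card_family foldrE big_map big_enum (bigD1 a0) //= /F eqxx.
rewrite (eq_bigr (fun _ => #|B|)) => [|a /negbTE->]; last by apply: eq_card => b.
by rewrite prod_nat_const cardC1.
Qed.

Lemma mem_Filter (X : eqType) (I : finType) N (l : I -> X -> bool) (S : seq X) h omega
    (k : 'I_(size S)) x :
  uniq S -> onth S k = Some x ->
  (x \in @Defs.Filter X I N l S h omega) = ~~ discarded (fun t => l (omega k t) x) (h x).
Proof.
move=> uS Sk; rewrite mem_pmap; apply/mapP/idP => [[k' _]|keep]; last first.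
  by exists k; rewrite ?mem_enum // Sk (negbTE keep).
case Sk': (onth S k') => [x'|] //; case: ifP => // + [x'x]; subst x'.
suff -> : k = k' by move/negbT.
by apply: val_inj; apply: (onth_inj _ _ _ uS); rewrite ?Sk ?Sk' // gtn_min ltn_ord.
Qed.

Lemma prob_in_filterE (X : eqType) (I : finType) N (l : I -> X -> bool) (S : seq X) h x :
  (0 < #|I|)%N -> uniq S -> x \in S ->
  prob_in_filter N l S h x =
    vote_sum (fun i => l i x == h x) (fun z : 'I_N -> bool => (~~ discarded_after 0 0 z)%:R)
    / #|I|%:R ^+ N.
Proof.
move=> I_gt0 uS /onthP[k0 Sk0].
have k0S : (k0 < size S)%N by rewrite -onthTE Sk0.
pose k := Ordinal k0S.
rewrite /prob_in_filter.
under eq_finset => omega do rewrite (mem_Filter _ _ _ uS (_ : onth S k = _)) //.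
rewrite (card_ffun_at k (fun w : {ffun 'I_N -> I} => ~~ discarded (fun t => l (w t) x) (h x))).
rewrite vote_sum_card (eq_card (fun w => congr1 negb (discardedE _ _))).
rewrite !card_ffun !card_ord -(prednK (leq_ltn_trans (leq0n _) k0S)) /= natrM !natrX.
have B_neq0 : (#|I|%:R : RR) ^+ N ^+ (size S).-1 != 0.
  by rewrite !expf_neq0 // pnatr_eq0 -lt0n.
by rewrite exprSr invfM mulrA mulfK.
Qed.

Section VoteWeight.
Variables (R : numFieldType) (q : R).

Definition vote_weight n (z : 'I_n -> bool) : R := \prod_(t < n) (if z t then q^-1 else q).

Lemma vote_weightM_exp n (z : 'I_n -> bool) :
  q != 0 -> vote_weight z * q ^+ (2 * \sum_(t < n) z t) = q ^+ n.
Proof.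
move=> q_neq0; elim: n z => [|n IHn] z; first by rewrite /vote_weight !big_ord0 mul1r.
rewrite /vote_weight !big_ord_recl /= -/(vote_weight _) mulnDr exprD mulrACA.
rewrite IHn exprS; congr (_ * _).
by case: (z ord0); rewrite /= ?muln0 ?expr0 ?mulr1 // expr2 mulrA mulVf ?mul1r.
Qed.

Lemma vote_weight_ge1 n (z : 'I_n -> bool) :
  1 <= q -> (2 * \sum_(t < n) z t <= n)%N -> 1 <= vote_weight z.
Proof.
move=> q_ge1 le_n; have q_gt0 : 0 < q := lt_le_trans ltr01 q_ge1.
rewrite -(ler_pM2r (exprn_gt0 (2 * \sum_(t < n) z t) q_gt0)) mul1r.
by rewrite vote_weightM_exp ?gt_eqF // ler_weXn2l.
Qed.

Lemma vote_weight_ge0 n (z : 'I_n -> bool) : 0 <= q -> 0 <= vote_weight z.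
Proof. by move=> q_ge0; apply: prodr_ge0 => t _; case: (z t); rewrite ?invr_ge0. Qed.

Lemma not_discarded_le_weight n (z : 'I_n -> bool) :
  1 <= q -> (~~ discarded_after 0 0 z)%:R <= vote_weight z.
Proof.
move=> q_ge1; case: (boolP (discarded_after 0 0 z)) => [_|keep].
  by apply: vote_weight_ge0; apply: le_trans q_ge1.
apply: vote_weight_ge1 => //.
by have := not_discarded_sum_le (a := 0) (c := 0) (leqnn 0) keep.
Qed.

End VoteWeight.

Section Bounds.
Variables (R : realFieldType) (I : finType) (g : I -> bool).

(* [a.+1 - 2 * c] is the number of net successes still missing for discarding. *)
Lemma vote_sum_discarded_le (rho : R) : 0 <= rho ->
    \sum_(i : I) (if g i then 1 else rho ^+ 2) <= #|I|%:R * rho ->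
  forall n a c, (2 * c <= a)%N ->
  vote_sum g (fun z : 'I_n -> bool => (discarded_after a c z)%:R) <=
    #|I|%:R ^+ n * rho ^+ (a.+1 - 2 * c).
Proof.
move=> rho_ge0 step; elim=> [|n IHn] a c ca.
  under eq_fun => z do rewrite discarded_after0.
  by rewrite vote_sum_const mul0r mulr_ge0 ?exprn_ge0.
set e := (a.+1 - 2 * c)%N.
have not_now (b : bool) :
    (2 * (c + b) <= a.+1)%N -> (odd a.+1 && (a.+1 < 2 * (c + b))%N) = false.
  by move=> le_a; rewrite ltnNge le_a andbF.
have per_vote i :
    vote_sum g (fun z : 'I_n -> bool => (discarded_after a c (fcons (g i) z))%:R) <=
    #|I|%:R ^+ n * rho ^+ e.-1 * (if g i then 1 else rho ^+ 2).
  under eq_fun => z do rewrite discarded_afterS fcons0 fcons_tail.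
  case: (g i); last first.
    rewrite (not_now false) /=; last by lia.
    by rewrite -mulrA -exprD (_ : e.-1 + 2 = a.+2 - 2 * (c + 0))%N; [apply: IHn|]; lia.
  have [ca_eq|ca_ne] := eqVneq (2 * c)%N a.
    apply: le_trans (ler_vote_sum g (G := fun=> 1) _) _ => [z|].
      by case: (_ || _).
    by rewrite vote_sum_const /e -ca_eq subSn // subnn expr0 mul1r !mulr1.
  rewrite (not_now true) /=; last by lia.
  by rewrite mulr1 (_ : e.-1 = a.+2 - 2 * (c + 1))%N; [apply: IHn|]; lia.
rewrite vote_sumS; apply: le_trans (ler_sum _ (fun i _ => per_vote i)) _.
rewrite -mulr_sumr; apply: le_trans (ler_wpM2l _ step) _; first by rewrite mulr_ge0 ?exprn_ge0.
have -> : e = e.-1.+1 by lia.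
by rewrite !exprS; lra.
Qed.

Lemma vote_sum_not_discarded_le (q : R) n : 1 <= q ->
  vote_sum g (fun z : 'I_n -> bool => (~~ discarded_after 0 0 z)%:R) <=
    (\sum_(i : I) (if g i then q^-1 else q)) ^+ n.
Proof.
move=> q_ge1; rewrite -(vote_sum_prod g _ (fun b => if b then q^-1 else q)).
by apply: ler_vote_sum => z; apply: not_discarded_le_weight.
Qed.

Lemma sum_bool_card (F : bool -> R) :
  \sum_(i : I) F (g i) = #|g|%:R * F true + (#|I|%:R - #|g|%:R) * F false.
Proof.
rewrite (bigID g) /= -(cardC g) natrD addrAC subrr add0r; congr (_ + _).
  by rewrite (eq_bigr (fun=> F true)) => [|i ->] //; rewrite sumr_const mulr_natl.
rewrite (eq_bigr (fun=> F false)) => [|i /negbTE gi]; last by rewrite gi.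
by rewrite sumr_const mulr_natl.
Qed.

Lemma vote_sum_not_discarded_majority n : 7 / 10 * #|I|%:R <= #|g|%:R :> R ->
  vote_sum g (fun z : 'I_n -> bool => (~~ discarded_after 0 0 z)%:R) <=
    (11 / 12 * #|I|%:R : R) ^+ n.
Proof.
move=> g_major; apply: le_trans (vote_sum_not_discarded_le n (_ : 1 <= 3 / 2)) _; first lra.
have g_le : #|g|%:R <= #|I|%:R :> R by rewrite ler_nat max_card.
have g_ge0 : 0 <= #|g|%:R :> R by [].
apply: lerXn2r; rewrite ?nnegrE ?(sum_bool_card (fun b => if b then _ else _)) ?invf_div.
all: lra.
Qed.

Lemma vote_sum_discarded_minority n : #|g|%:R <= 3 / 10 * #|I|%:R :> R ->
  vote_sum g (fun z : 'I_n -> bool => (discarded_after 0 0 z)%:R) <=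
    #|I|%:R ^+ n * (3 / 7 : R).
Proof.
move=> g_minor; rewrite -[3 / 7]expr1.
apply: vote_sum_discarded_le => //.
have g_ge0 : 0 <= #|g|%:R :> R by [].
by rewrite (sum_bool_card (fun b => if b then _ else _)) expr2; lra.
Qed.

End Bounds.

Lemma le_natr_absz_ceil (R : archiRealFieldType) (x : R) : x <= `|Num.ceil x|%:R.
Proof.
have [x_ge0|x_lt0] := lerP 0 x; last exact: le_trans (ltW x_lt0) _.
by rewrite natr_absz ger0_norm ?ceil_ge // ceil_ge0 (lt_le_trans _ x_ge0) ?ltrN10.
Qed.

Lemma expr_le_of_ln (R : realType) (eps : R) N :
  0 < eps -> 12 * ln eps^-1 <= N%:R -> (11 / 12) ^+ N <= eps.
Proof.
move=> eps_gt0 N_ge; have -> : eps = expR (- ln eps^-1).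
  by rewrite lnV ?opprK ?lnK // posrE.
apply: le_trans (_ : expR (- (1 / 12)) ^+ N <= _).
  by apply: lerXn2r; rewrite ?nnegrE ?expR_ge0 //; apply: le_trans (expR_ge1Dx _); lra.
by rewrite -expRM_natl ler_expR; lra.
Qed.

Lemma lt_sqrtr (R : rcfType) (x : R) : 0 < x -> x < 1 -> x < Num.sqrt x.
Proof.
move=> x_gt0 x_lt1; rewrite -[ltLHS](ger0_norm (ltW x_gt0)) -sqrtr_sqr ltr_sqrt //.
by rewrite expr2 gtr_pMr.
Qed.

Theorem lemma6 :
  exists C : Rdefinitions.R, 0 < C /\
  forall (eps : Rdefinitions.R), 0 < eps -> eps < 1 ->
  forall (X : eqType) (I : finType) (l : I -> X -> bool) (f : X -> bool),
    (0 < #|I|)%N ->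
    7 / 10 <= alpha_perfect l f ->
  forall (S : seq X) (h : X -> bool), uniq S ->
  let N := `|Num.ceil (C * ln (eps^-1))|%N in
  forall x, x \in S ->
    (h x = f x -> prob_in_filter N l S h x < Num.sqrt eps) /\
    (h x <> f x -> 1 / 2 <= prob_in_filter N l S h x).
Proof.
exists 12; split=> [|eps eps_gt0 eps_lt1 X I l f I_gt0 alpha_ge S h uS N x xS]; first lra.
have N_ge : 12 * ln eps^-1 <= N%:R := le_natr_absz_ceil _.
clearbody N. (* [lra] would otherwise try to evaluate the exponent [N] *)
pose perfect_set := [set i | `[< perfect l f i >]].
have perfect_ge : 7 / 10 * #|I|%:R <= #|perfect_set|%:R :> RR.
  by move: alpha_ge; rewrite /alpha_perfect ler_pdivlMr // ltr0n.
have IN_gt0 : 0 < #|I|%:R ^+ N :> RR by rewrite exprn_gt0 // ltr0n.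
rewrite prob_in_filterE //; set g := fun i => l i x == h x; split=> [hf|hNf].
- have g_major : 7 / 10 * #|I|%:R <= #|g|%:R :> RR.
    apply: le_trans perfect_ge _; rewrite ler_nat; apply/subset_leq_card/fintype.subsetP => i.
    by rewrite inE => /asboolP perf; rewrite unfold_in /g perf hf.
  rewrite ltr_pdivrMr //; apply: le_lt_trans (vote_sum_not_discarded_majority N g_major) _.
  rewrite exprMn ltr_pM2r //; apply: le_lt_trans (lt_sqrtr eps_gt0 eps_lt1).
  exact: expr_le_of_ln.
- have g_minor : #|g|%:R <= 3 / 10 * #|I|%:R :> RR.
    have : (#|g| + #|perfect_set| <= #|I|)%N.
      rewrite -(cardC g) leq_add2l; apply/subset_leq_card/fintype.subsetP => i.
      by rewrite inE => /asboolP perf; rewrite !unfold_in /g perf eq_sym; apply/eqP.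
    by rewrite -(ler_nat RR) natrD => card_le; lra.
  rewrite ler_pdivlMr // vote_sumN.
  by have := vote_sum_discarded_minority N g_minor; lra.
Qed.
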